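(* For $0\le\alpha,\beta\le d$, with $s_0=z$ and $s_\alpha=(1+w_\alpha v_\alpha)\cdots(1+w_1v_1)z$ for $\alpha\geq1$, $$\{\!\{s_\alpha,s_\beta\}\!\}=\tfrac12(e_0\otimes s_\alpha s_\beta-s_\beta s_\alpha\otimes e_0)+\tfrac12o(\alpha,\beta)(s_\beta\otimes s_\alpha-s_\alpha\otimes s_\beta).$$
   Context: Fix $d\ge1$; $o(\alpha,\beta)=0,1,-1$ according as $\alpha=\beta,\alpha<\beta,\alpha>\beta$. Let $\mathbb C\bar Q$ be the path algebra generated by orthogonal idempotents $e_0,e_\infty$ with $e_0+e_\infty=1$ and arrows $x,y$ (loops at vertex $0$: $x=e_0xe_0$, $y=e_0ye_0$), $v_\alpha=e_\infty v_\alpha e_0$, $w_\alpha=e_0w_\alpha e_\infty$ ($\alpha=1,\dots,d$); paths are written left to right. Let $\mathcal A^\times$ be obtained by formally inverting $1+xy,1+yx,1+w_\alpha v_\alpha,1+v_\alpha w_\alpha$ and adjoining $x^{-1}=e_0x^{-1}e_0$ with $xx^{-1}=x^{-1}x=e_0$; put $z=y+x^{-1}$ (invertible in $e_0\mathcal A^\times e_0$). A double bracket is a bilinear map $\{\!\{-,-\}\!\}:\mathcal A^\times\times\mathcal A^\times\to\mathcal A^\times\otimes\mathcal A^\times$ with $\{\!\{a,b\}\!\}=-\{\!\{b,a\}\!\}^\circ$ ($(u\otimes v)^\circ=v\otimes u$) and $\{\!\{a,bc\}\!\}=b\{\!\{a,c\}\!\}+\{\!\{a,b\}\!\}c$ for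 the outer bimodule structure $b(u\otimes v)c=bu\otimes vc$. The double bracket used is the unique one vanishing on $e_0,e_\infty$ with $\{\!\{x,x\}\!\}=\tfrac12(x^2\otimes e_0-e_0\otimes x^2)$, $\{\!\{y,y\}\!\}=\tfrac12(e_0\otimes y^2-y^2\otimes e_0)$, $\{\!\{x,y\}\!\}=e_0\otimes e_0+\tfrac12(yx\otimes e_0+e_0\otimes xy+y\otimes x-x\otimes y)$, $\{\!\{u,w_\alpha\}\!\}=\tfrac12(e_0\otimes uw_\alpha-u\otimes w_\alpha)$, $\{\!\{u,v_\alpha\}\!\}=\tfrac12(v_\alpha u\otimes e_0-v_\alpha\otimes u)$ for $u\in\{x,y\}$, $\{\!\{v_\alpha,v_\beta\}\!\}=\tfrac12o(\beta,\alpha)(v_\alpha\otimes v_\beta+v_\beta\otimes v_\alpha)$, $\{\!\{w_\alpha,w_\beta\}\!\}=\tfrac12o(\beta,\alpha)(w_\alpha\otimes w_\beta+w_\beta\otimes w_\alpha)$, $\{\!\{v_\alpha,w_\beta\}\!\}=\delta_{\alpha\beta}(e_0\otimes e_\infty+\tfrac12w_\alpha v_\alpha\otimes e_\infty+\tfrac12e_0\otimes v_\alpha w_\alpha)+\tfrac12o(\alpha,\beta)(e_0\otimes v_\alpha w_\beta+w_\beta v_\alpha\otimes e_\infty)$, extended uniquely to $\mathcal A^\times$ (it also satisfies $\{\!\{bc,a\}\!\}=\{\!\{b,a\}\!\}'c\otimes\{\!\{b,a\}\!\}''+\{\!\{c,a\}\!\}'\otimes b\{\!\{c,a\}\!\}''$).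 *)

From HB Require Import structures.
From mathcomp Require Import all_boot all_order all_algebra.
Set Implicit Arguments. Unset Strict Implicit. Unset Printing Implicit Defensive.
Import Order.TTheory GRing.Theory Num.Theory.
Local Open Scope ring_scope.

Definition osgn (F : pzRingType) (a b : nat) : F :=
  if a == b then 0 else if (a < b)%N then 1 else -1.

(* A model of the target A (x) A of a double bracket on the F-algebra A:
   an F-vector space T with a bilinear map tens : A -> A -> T (u (x) v),
   the outer A-bimodule structure (lact b t = b t, ract t c = t c) with
   b (u (x) v) c = b u (x) v c, and the flip t |-> t° with (u (x) v)° = v (x) u. *)
Record tensor_model (F : fieldType) (A : algType F) (T : lmodType F)
    (tens : A -> A -> T) (lact : A -> T -> T) (ract : T -> A -> T)
    (swap : T -> T) : Prop := TensorModel {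
  tensDl : forall u1 u2 v, tens (u1 + u2) v = tens u1 v + tens u2 v;
  tensDr : forall u v1 v2, tens u (v1 + v2) = tens u v1 + tens u v2;
  tensZl : forall (k : F) u v, tens (k *: u) v = k *: tens u v;
  tensZr : forall (k : F) u v, tens u (k *: v) = k *: tens u v;
  lactDr : forall b t1 t2, lact b (t1 + t2) = lact b t1 + lact b t2;
  lactZr : forall b (k : F) t, lact b (k *: t) = k *: lact b t;
  lactDl : forall b1 b2 t, lact (b1 + b2) t = lact b1 t + lact b2 t;
  lactZl : forall b (k : F) t, lact (k *: b) t = k *: lact b t;
  ractDl : forall t1 t2 c, ract (t1 + t2) c = ract t1 c + ract t2 c;
  ractZl : forall (k : F) t c, ract (k *: t) c = k *: ract t c;
  ractDr : forall t c1 c2, ract t (c1 + c2) = ract t c1 + ract t c2;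
  ractZr : forall t (k : F) c, ract t (k *: c) = k *: ract t c;
  lact1 : forall t, lact 1 t = t;
  ract1 : forall t, ract t 1 = t;
  lactM : forall b1 b2 t, lact (b1 * b2) t = lact b1 (lact b2 t);
  ractM : forall t c1 c2, ract t (c1 * c2) = ract (ract t c1) c2;
  lact_ract : forall b t c, lact b (ract t c) = ract (lact b t) c;
  lact_tens : forall b u v, lact b (tens u v) = tens (b * u) v;
  ract_tens : forall u v c, ract (tens u v) c = tens u (v * c);
  swapD : forall t1 t2, swap (t1 + t2) = swap t1 + swap t2;
  swapZ : forall (k : F) t, swap (k *: t) = k *: swap t;
  swapK : forall t, swap (swap t) = t;
  swap_tens : forall u v, swap (tens u v) = tens v u
}.

(* inner bimodule action  b * (u (x) v) * c = u c (x) b v  *)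
Definition inner_act (F : fieldType) (A : algType F) (T : lmodType F)
    (lact : A -> T -> T) (ract : T -> A -> T) (swap : T -> T)
    (b : A) (t : T) (c : A) : T :=
  swap (ract (lact b (swap t)) c).

(* A double bracket {{-,-}} = br : bilinear, {{a,b}} = -{{b,a}}°,
   {{a,bc}} = b{{a,c}} + {{a,b}}c (outer), and
   {{bc,a}} = {{b,a}}'c (x) {{b,a}}'' + {{c,a}}' (x) b{{c,a}}'' (inner). *)
Record double_bracket (F : fieldType) (A : algType F) (T : lmodType F)
    (lact : A -> T -> T) (ract : T -> A -> T) (swap : T -> T)
    (br : A -> A -> T) : Prop := DoubleBracket {
  brDl : forall a1 a2 b, br (a1 + a2) b = br a1 b + br a2 b;
  brDr : forall a b1 b2, br a (b1 + b2) = br a b1 + br a b2;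
  brZl : forall (k : F) a b, br (k *: a) b = k *: br a b;
  brZr : forall (k : F) a b, br a (k *: b) = k *: br a b;
  br_skew : forall a b, br a b = - swap (br b a);
  br_leibniz : forall a b c, br a (b * c) = lact b (br a c) + ract (br a b) c;
  br_leibnizl : forall a b c,
    br (b * c) a = inner_act lact ract swap 1 (br b a) c
                   + inner_act lact ract swap b (br c a) 1
}.

(* Relations of the localized path algebra A^x of the double quiver:
   vertices e0, einf; loops x, y at 0; arrows v_a : 0 -> inf (v_a = einf v_a e0),
   w_a : inf -> 0 (w_a = e0 w_a einf), a = 1..d (paths left to right);
   xinv = x^{-1} in e0 A e0; 1+xy, 1+yx, 1+w_a v_a, 1+v_a w_a invertible. *)
Definition invertible (F : fieldType) (A : algType F) (a : A) : Prop :=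
  exists b : A, a * b = 1 /\ b * a = 1.

Record quiver_relations (F : fieldType) (A : algType F) (d : nat)
    (e0 einf x y xinv : A) (v w : nat -> A) : Prop := QuiverRelations {
  e0_idem : e0 * e0 = e0;
  einf_idem : einf * einf = einf;
  e0_einf : e0 * einf = 0;
  einf_e0 : einf * e0 = 0;
  e0_einf_sum : e0 + einf = 1;
  x_at0 : x = e0 * x * e0;
  y_at0 : y = e0 * y * e0;
  v_arrow : forall a, (1 <= a <= d)%N -> v a = einf * v a * e0;
  w_arrow : forall a, (1 <= a <= d)%N -> w a = e0 * w a * einf;
  xinv_at0 : xinv = e0 * xinv * e0;
  x_xinv : x * xinv = e0;
  xinv_x : xinv * x = e0;
  inv_1xy : invertible (1 + x * y);
  inv_1yx : invertible (1 + y * x);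
  inv_1wv : forall a, (1 <= a <= d)%N -> invertible (1 + w a * v a);
  inv_1vw : forall a, (1 <= a <= d)%N -> invertible (1 + v a * w a)
}.

Record bracket_on_generators (F : fieldType) (A : algType F) (T : lmodType F)
    (tens : A -> A -> T) (br : A -> A -> T) (d : nat)
    (e0 einf x y : A) (v w : nat -> A) : Prop := BracketOnGenerators {
  br_e0l : forall a, br e0 a = 0;
  br_einfl : forall a, br einf a = 0;
  br_e0r : forall a, br a e0 = 0;
  br_einfr : forall a, br a einf = 0;
  br_xx : br x x = 2^-1 *: (tens (x * x) e0 - tens e0 (x * x));
  br_yy : br y y = 2^-1 *: (tens e0 (y * y) - tens (y * y) e0);
  br_xy : br x y = tens e0 e0
      + 2^-1 *: (tens (y * x) e0 + tens e0 (x * y) + tens y x - tens x y);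
  br_uw : forall u a, (u = x \/ u = y) -> (1 <= a <= d)%N ->
      br u (w a) = 2^-1 *: (tens e0 (u * w a) - tens u (w a));
  br_uv : forall u a, (u = x \/ u = y) -> (1 <= a <= d)%N ->
      br u (v a) = 2^-1 *: (tens (v a * u) e0 - tens (v a) u);
  br_vv : forall a b, (1 <= a <= d)%N -> (1 <= b <= d)%N ->
      br (v a) (v b) = (2^-1 * osgn F b a) *: (tens (v a) (v b) + tens (v b) (v a));
  br_ww : forall a b, (1 <= a <= d)%N -> (1 <= b <= d)%N ->
      br (w a) (w b) = (2^-1 * osgn F b a) *: (tens (w a) (w b) + tens (w b) (w a));
  br_vw : forall a b, (1 <= a <= d)%N -> (1 <= b <= d)%N ->
      br (v a) (w b) =
        (if a == b then
           tens e0 einf + 2^-1 *: tens (w a * v a) einf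
           + 2^-1 *: tens e0 (v a * w a)
         else 0)
        + (2^-1 * osgn F a b) *: (tens e0 (v a * w b) + tens (w b * v a) einf)
}.

Fixpoint sfun (A : pzRingType) (v w : nat -> A) (z : A) (a : nat) : A :=
  match a with
  | 0 => z
  | k.+1 => (1 + w k.+1 * v k.+1) * sfun v w z k
  end.

(* Write K_c = w_c v_c, so that s_c = s_(c-1) + K_c s_(c-1).  For c > a, the
   element s_a brackets with w_c and v_c in a fixed "standard" form: z does,
   by the brackets of x and y with the arrows (and of x^-1, obtained from
   x x^-1 = e_0), each K_e with e < c does, since o(e, c) = 1 makes the
   arrow-arrow brackets collapse, and the form is stable under sums and under
   products whose inner end is absorbed by e_0.  Leibniz then gives
   {{s_a, K_c}}; together with {{K_c, K_c}} this propagates the formula from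
   (s_a, s_b) to (s_a, s_(b+1)) and from (s_a, s_a) to (s_(a+1), s_(a+1)), and
   skew-symmetry covers a > b. *)

From HB Require Import structures.
From mathcomp Require Import all_boot all_order all_algebra.
From mathcomp Require Import ring zify.
Import Order.TTheory GRing.Theory Num.Theory.

Set Implicit Arguments.
Unset Strict Implicit.
Unset Printing Implicit Defensive.

Local Open Scope ring_scope.

Section LinearCombinations.
Variables (F : fieldType) (V : lmodType F).

Inductive lin_expr : Type :=
  | LZero
  | LAtom of nat
  | LAdd of lin_expr & lin_expr
  | LOpp of lin_expr
  | LScale of F & lin_expr.

Fixpoint lin_eval (env : seq V) (e : lin_expr) : V :=
  match e with
  | LZero => 0
  | LAtom i => nth 0 env i
  | LAdd e1 e2 => lin_eval env e1 + lin_eval env e2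
  | LOpp e1 => - lin_eval env e1
  | LScale k e1 => k *: lin_eval env e1
  end.

Fixpoint lin_coef (e : lin_expr) (i : nat) : F :=
  match e with
  | LZero => 0
  | LAtom j => if eqn i j then 1 else 0
  | LAdd e1 e2 => lin_coef e1 i + lin_coef e2 i
  | LOpp e1 => - lin_coef e1 i
  | LScale k e1 => k * lin_coef e1 i
  end.

Lemma lin_evalE env e :
  lin_eval env e = \sum_(i < size env) lin_coef e i *: nth 0 env i.
Proof.
elim: e => [|j|e1 IH1 e2 IH2|e1 IH|k e1 IH] /=.
- by rewrite big1 // => i _; rewrite scale0r.
- have coef_atom (i : 'I_(size env)) : (if eqn i j then 1 else 0) = (i == j :> nat)%:R.
    by case: eqnP => [->|/eqP/negbTE->]; rewrite ?eqxx.
  under eq_bigr => i _ do rewrite coef_atom.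
  case: (ltnP j (size env)) => hj.
  + rewrite (bigD1 (Ordinal hj)) //= eqxx scale1r big1 ?addr0 // => i ne_ij.
    by rewrite (negbTE (ne_ij : (i : nat) != j)) scale0r.
  + rewrite nth_default // big1 // => i _.
    by rewrite ltn_eqF ?scale0r // (leq_trans (ltn_ord i) hj).
- by rewrite IH1 IH2 -big_split; apply: eq_bigr => i _; rewrite scalerDl.
- by rewrite IH -sumrN; apply: eq_bigr => i _; rewrite scaleNr.
- by rewrite IH scaler_sumr; apply: eq_bigr => i _; rewrite scalerA.
Qed.

Fixpoint coefs_agree (e1 e2 : lin_expr) (n : nat) : Prop :=
  match n with
  | 0 => True
  | n'.+1 => coefs_agree e1 e2 n' /\ lin_coef e1 n' = lin_coef e2 n'
  end.

Lemma coefs_agreeP e1 e2 n :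
  coefs_agree e1 e2 n -> forall i, (i < n)%N -> lin_coef e1 i = lin_coef e2 i.
Proof.
elim: n => // n IH /= [/IH agree_lt agree_n] i.
by rewrite ltnS leq_eqVlt => /predU1P [->|/agree_lt].
Qed.

Lemma lin_eval_eq env e1 e2 :
  coefs_agree e1 e2 (size env) -> lin_eval env e1 = lin_eval env e2.
Proof.
move/coefs_agreeP=> agree; rewrite !lin_evalE.
by apply: eq_bigr => i _; rewrite agree.
Qed.

End LinearCombinations.

Arguments LAdd {F}. Arguments LOpp {F}. Arguments LScale {F}.

(* Atoms are identified up to unification, not syntactically. *)
Ltac lin_find t env :=
  match env with
  | (?u :: _)%SEQ =>
      let _ := constr:(ltac:(unify t u; exact tt) : unit) in constr:(0%N)
  | (_ :: ?env')%SEQ => let n := lin_find t env' in constr:(n.+1)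
  end.

Ltac lin_reify F env t :=
  lazymatch t with
  | @Algebra.zero _ => constr:((LZero F, env))
  | @Algebra.add _ ?a ?b =>
      match lin_reify F env a with
      | (?e1, ?env1) =>
          match lin_reify F env1 b with
          | (?e2, ?env2) => constr:((LAdd e1 e2, env2))
          end
      end
  | @Algebra.opp _ ?a =>
      match lin_reify F env a with (?e1, ?env1) => constr:((LOpp e1, env1)) end
  | @GRing.scale _ _ ?k ?a =>
      match lin_reify F env a with (?e1, ?env1) => constr:((LScale k e1, env1)) end
  | _ =>
      match env with
      | _ => let n := lin_find t env in constr:((LAtom F n, env))
      | _ => let env' := eval cbv [rcons] in (rcons env t) in
             let n := lin_find t env' in constr:((LAtom F n, env'))
      end
  end.

(* Proves an identity between F-linear combinations of arbitrary vectors
   (the atoms) by comparing the coefficients of each atom with [field]. *)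
Ltac lincomb F :=
  match goal with
  | |- @eq ?V ?lhs ?rhs =>
      match lin_reify F (@nil V) lhs with
      | (?e1, ?env1) =>
          match lin_reify F env1 rhs with
          | (?e2, ?env2) =>
              apply: (@lin_eval_eq _ _ env2 e1 e2);
              cbn [coefs_agree lin_coef size eqn];
              repeat split; first [ring | (field; by rewrite ?pnatr_eq0)]
          end
      end
  end.

Lemma additive_map0 (U V : zmodType) (f : U -> V) :
  {morph f : a b / a + b} -> f 0 = 0.
Proof. by move=> fD; apply: (addrI (f 0)); rewrite -fD !addr0. Qed.

Lemma additive_mapN (U V : zmodType) (f : U -> V) :
  {morph f : a b / a + b} -> {morph f : a / - a}.
Proof. by move=> fD a; apply: (addrI (f a)); rewrite -fD !subrr (additive_map0 fD). Qed.

Section TensorModelLaws.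
Variables (F : fieldType) (A : algType F) (T : lmodType F).
Variables (tens : A -> A -> T) (lact : A -> T -> T) (ract : T -> A -> T).
Variable swap : T -> T.
Hypothesis HT : tensor_model tens lact ract swap.

Lemma tens0l v : tens 0 v = 0.
Proof. exact: (additive_map0 (fun a b => tensDl HT a b v)). Qed.

Lemma tens0r u : tens u 0 = 0.
Proof. exact: (additive_map0 (tensDr HT u)). Qed.

Lemma tensNl u v : tens (- u) v = - tens u v.
Proof. exact: (additive_mapN (fun a b => tensDl HT a b v)). Qed.

Lemma tensNr u v : tens u (- v) = - tens u v.
Proof. exact: (additive_mapN (tensDr HT u)). Qed.

Lemma lact0r b : lact b 0 = 0.
Proof. exact: (additive_map0 (lactDr HT b)). Qed.

Lemma lactNr b t : lact b (- t) = - lact b t.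
Proof. exact: (additive_mapN (lactDr HT b)). Qed.

Lemma ract0l c : ract 0 c = 0.
Proof. exact: (additive_map0 (fun a b => ractDl HT a b c)). Qed.

Lemma ractNl t c : ract (- t) c = - ract t c.
Proof. exact: (additive_mapN (fun a b => ractDl HT a b c)). Qed.

Lemma swap0 : swap 0 = 0.
Proof. exact: (additive_map0 (swapD HT)). Qed.

Lemma swapN t : swap (- t) = - swap t.
Proof. exact: (additive_mapN (swapD HT)). Qed.

Variable br : A -> A -> T.
Hypothesis Hbr : double_bracket lact ract swap br.

Lemma br_mull a b c :
  br (b * c) a = swap (ract (swap (br b a)) c) + swap (lact b (swap (br c a))).
Proof. by rewrite (br_leibnizl Hbr) /inner_act (lact1 HT) (ract1 HT). Qed.

End TensorModelLaws.

Lemma mulrA_subst (R : pzRingType) (u v t : R) : u * v = t -> forall r, r * u * v = r * t.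
Proof. by move=> uvt r; rewrite -mulrA uvt. Qed.

Lemma corner_mull (R : pzRingType) (e u : R) : e * e = e -> u = e * u * e -> e * u = u.
Proof. by move=> ee ->; rewrite !mulrA ee. Qed.

Lemma corner_mulr (R : pzRingType) (e u : R) : e * e = e -> u = e * u * e -> u * e = u.
Proof. by move=> ee ->; rewrite -!mulrA ee. Qed.

Lemma osgn_id (F : pzRingType) a : osgn F a a = 0.
Proof. by rewrite /osgn eqxx. Qed.

Lemma osgn_lt (F : pzRingType) a b : (a < b)%N -> osgn F a b = 1.
Proof. by move=> ltab; rewrite /osgn ltab ltn_eqF. Qed.

Lemma osgn_gt (F : pzRingType) a b : (b < a)%N -> osgn F a b = -1.
Proof. by move=> ltba; rewrite /osgn gtn_eqF // ltnNge ltnW. Qed.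

Section QuiverBracket.
Variables (F : numFieldType) (d : nat) (A : algType F) (T : lmodType F).
Variables (tens : A -> A -> T) (lact : A -> T -> T) (ract : T -> A -> T).
Variables (swap : T -> T) (br : A -> A -> T).
Variables (e0 einf x y xinv : A) (v w : nat -> A).
Hypotheses (HT : tensor_model tens lact ract swap)
  (Hbr : double_bracket lact ract swap br)
  (HA : quiver_relations d e0 einf x y xinv v w)
  (Hgen : bracket_on_generators tens br d e0 einf x y v w).

Let tensor_rules := (tensDl HT, tensDr HT, tensNl HT, tensNr HT, tens0l HT,
  tens0r HT, lactDr HT, lactNr HT, lactZr HT, lact0r HT, ractDl HT, ractNl HT,
  ractZl HT, ract0l HT, swapD HT, swapN HT, swapZ HT, swap0 HT, lact_tens HT,
  ract_tens HT, swap_tens HT).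

Let e0x : e0 * x = x. Proof. exact: corner_mull (e0_idem HA) (x_at0 HA). Qed.
Let xe0 : x * e0 = x. Proof. exact: corner_mulr (e0_idem HA) (x_at0 HA). Qed.
Let e0y : e0 * y = y. Proof. exact: corner_mull (e0_idem HA) (y_at0 HA). Qed.
Let ye0 : y * e0 = y. Proof. exact: corner_mulr (e0_idem HA) (y_at0 HA). Qed.
Let e0xinv : e0 * xinv = xinv. Proof. exact: corner_mull (e0_idem HA) (xinv_at0 HA). Qed.
Let xinve0 : xinv * e0 = xinv. Proof. exact: corner_mulr (e0_idem HA) (xinv_at0 HA). Qed.

(* Oriented for the left-associated products produced by [mulrA]. *)
Let corner_rules := (e0x, xe0, e0y, ye0, e0xinv, xinve0, e0_idem HA, x_xinv HA,
  xinv_x HA, mulrA_subst xe0, mulrA_subst ye0, mulrA_subst xinve0,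
  mulrA_subst (x_xinv HA), mulrA_subst (xinv_x HA)).

Lemma e0w c : (1 <= c <= d)%N -> e0 * w c = w c.
Proof. by move=> hc; rewrite (w_arrow HA hc) !mulrA (e0_idem HA). Qed.

Lemma w_einf c : (1 <= c <= d)%N -> w c * einf = w c.
Proof. by move=> hc; rewrite (w_arrow HA hc) -!mulrA (einf_idem HA). Qed.

Lemma einfv c : (1 <= c <= d)%N -> einf * v c = v c.
Proof. by move=> hc; rewrite (v_arrow HA hc) !mulrA (einf_idem HA). Qed.

Lemma ve0 c : (1 <= c <= d)%N -> v c * e0 = v c.
Proof. by move=> hc; rewrite (v_arrow HA hc) -!mulrA (e0_idem HA). Qed.

(* Differentiate [x xinv = e0] with [br u], then multiply on the left by [xinv]. *)
Lemma br_xinvr u : br u xinv = - lact xinv (ract (br u x) xinv).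
Proof.
have br_xxinv := br_leibniz Hbr u x xinv.
rewrite (x_xinv HA) (br_e0r Hgen) in br_xxinv.
have e0_br : br u xinv = lact e0 (br u xinv).
  by rewrite -{1}e0xinv (br_leibniz Hbr) (br_e0r Hgen) (ract0l HT) addr0.
rewrite e0_br -(xinv_x HA) (lactM HT) -(lactNr HT); congr (lact xinv _).
by apply/eqP; rewrite -addr_eq0 -br_xxinv.
Qed.

Local Notation z := (y + xinv).

Lemma e0z : e0 * z = z. Proof. by rewrite mulrDr e0y e0xinv. Qed.

Lemma br_zz : br z z = 2^-1 *: (tens e0 (z * z) - tens (z * z) e0).
Proof.
rewrite !(brDl Hbr) !(brDr Hbr).
rewrite (br_skew Hbr xinv y) !br_xinvr (br_skew Hbr xinv x) br_xinvr (br_skew Hbr y x).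
rewrite (br_xx Hgen) (br_yy Hgen) (br_xy Hgen) ?mulrDl ?mulrDr !tensor_rules !mulrA.
rewrite ?corner_rules.
lincomb F.
Qed.

Definition std_brw c u := br u (w c) = 2^-1 *: (tens e0 (u * w c) - tens u (w c)).
Definition std_brv c u := br u (v c) = 2^-1 *: (tens (v c * u) e0 - tens (v c) u).

Lemma std_brwD c p q : std_brw c p -> std_brw c q -> std_brw c (p + q).
Proof. by rewrite /std_brw (brDl Hbr) => -> ->; rewrite mulrDl !tensor_rules; lincomb F. Qed.

Lemma std_brvD c p q : std_brv c p -> std_brv c q -> std_brv c (p + q).
Proof. by rewrite /std_brv (brDl Hbr) => -> ->; rewrite mulrDr !tensor_rules; lincomb F. Qed.

Lemma std_brwM c p q : e0 * q = q -> std_brw c p -> std_brw c q -> std_brw c (p * q).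
Proof.
rewrite /std_brw => e0q brp brq.
by rewrite (br_mull HT Hbr) brp brq !tensor_rules !mulrA e0q; lincomb F.
Qed.

Lemma std_brvM c p q : p * e0 = p -> std_brv c p -> std_brv c q -> std_brv c (p * q).
Proof.
rewrite /std_brv => pe0 brp brq.
by rewrite (br_mull HT Hbr) brp brq !tensor_rules !mulrA pe0; lincomb F.
Qed.

Lemma std_brw_z c : (1 <= c <= d)%N -> std_brw c z.
Proof.
move=> hc; rewrite /std_brw (brDl Hbr) (br_skew Hbr xinv) br_xinvr (br_skew Hbr (w c) x).
rewrite (br_uw Hgen (or_intror erefl) hc) (br_uw Hgen (or_introl erefl) hc).
by rewrite mulrDl !tensor_rules ?mulrA ?corner_rules ?(e0w hc); lincomb F.
Qed.

Lemma std_brv_z c : (1 <= c <= d)%N -> std_brv c z.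
Proof.
move=> hc; rewrite /std_brv (brDl Hbr) (br_skew Hbr xinv) br_xinvr (br_skew Hbr (v c) x).
rewrite (br_uv Hgen (or_intror erefl) hc) (br_uv Hgen (or_introl erefl) hc).
by rewrite mulrDr !tensor_rules ?mulrA ?corner_rules ?(ve0 hc); lincomb F.
Qed.

Lemma std_brw_wv c e : (1 <= e)%N -> (e < c <= d)%N -> std_brw c (w e * v e).
Proof.
move=> e_gt0 /andP[ltec lecd].
have he : (1 <= e <= d)%N by rewrite e_gt0 ltnW // (leq_trans ltec).
have hc : (1 <= c <= d)%N by rewrite lecd (leq_trans e_gt0) // ltnW.
rewrite /std_brw (br_mull HT Hbr) (br_ww Hgen he hc) (br_vw Hgen he hc).
rewrite (osgn_gt _ ltec) (osgn_lt _ ltec) (ltn_eqF ltec) add0r.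
by rewrite !tensor_rules !mulrA (w_einf he); lincomb F.
Qed.

Lemma std_brv_wv c e : (1 <= e)%N -> (e < c <= d)%N -> std_brv c (w e * v e).
Proof.
move=> e_gt0 /andP[ltec lecd].
have he : (1 <= e <= d)%N by rewrite e_gt0 ltnW // (leq_trans ltec).
have hc : (1 <= c <= d)%N by rewrite lecd (leq_trans e_gt0) // ltnW.
rewrite /std_brv (br_mull HT Hbr) (br_skew Hbr (w e)) (br_vv Hgen he hc).
rewrite (br_vw Hgen hc he) (osgn_gt _ ltec) (gtn_eqF ltec) add0r.
by rewrite !tensor_rules !mulrA (einfv he); lincomb F.
Qed.

Lemma br_wv_wv c : (1 <= c <= d)%N ->
  br (w c * v c) (w c * v c) =
    2^-1 *: (tens e0 (w c * v c * (w c * v c)) - tens (w c * v c * (w c * v c)) e0)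
    + (tens e0 (w c * v c) - tens (w c * v c) e0).
Proof.
move=> hc; rewrite (br_mull HT Hbr) !(br_leibniz Hbr) (br_skew Hbr (w c) (v c)).
rewrite (br_vw Hgen hc hc) (br_ww Hgen hc hc) (br_vv Hgen hc hc) eqxx osgn_id.
rewrite !tensor_rules !mulrA ?(w_einf hc) ?(einfv hc) ?(e0w hc) ?(ve0 hc).
lincomb F.
Qed.

Lemma br_std_wv c p : std_brw c p -> std_brv c p ->
  br p (w c * v c) = 2^-1 *: (tens (w c * v c * p) e0 - tens (w c * v c) p
                             + tens e0 (p * (w c * v c)) - tens p (w c * v c)).
Proof.
by move=> brw brv; rewrite (br_leibniz Hbr) brw brv !tensor_rules !mulrA; lincomb F.
Qed.

Lemma br_diag_step p K :
  e0 * p = p -> p * e0 = p -> e0 * K = K -> K * e0 = K ->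
  br p p = 2^-1 *: (tens e0 (p * p) - tens (p * p) e0) ->
  br K K = 2^-1 *: (tens e0 (K * K) - tens (K * K) e0) + (tens e0 K - tens K e0) ->
  br p K = 2^-1 *: (tens (K * p) e0 - tens K p + tens e0 (p * K) - tens p K) ->
  br (p + K * p) (p + K * p) =
    2^-1 *: (tens e0 ((p + K * p) * (p + K * p)) - tens ((p + K * p) * (p + K * p)) e0).
Proof.
move=> e0p pe0 e0K Ke0 brpp brKK brpK.
rewrite !(brDl Hbr) !(brDr Hbr) (br_mull HT Hbr (K * p)) (br_mull HT Hbr p).
rewrite !(br_leibniz Hbr) (br_skew Hbr K p) brpp brKK brpK ?mulrDl ?mulrDr.
rewrite !tensor_rules !mulrA ?e0p ?pe0 ?e0K ?Ke0 ?(mulrA_subst pe0) ?(mulrA_subst Ke0).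
lincomb F.
Qed.

Lemma br_offdiag_step p q K : e0 * q = q -> K * e0 = K ->
  br p q = 2^-1 *: (tens e0 (p * q) - tens (q * p) e0) + 2^-1 *: (tens q p - tens p q) ->
  br p K = 2^-1 *: (tens (K * p) e0 - tens K p + tens e0 (p * K) - tens p K) ->
  br p (q + K * q) = 2^-1 *: (tens e0 (p * (q + K * q)) - tens ((q + K * q) * p) e0)
    + 2^-1 *: (tens (q + K * q) p - tens p (q + K * q)).
Proof.
move=> e0q Ke0 brpq brpK.
rewrite (brDr Hbr) (br_leibniz Hbr p K q) brpq brpK ?mulrDl ?mulrDr.
by rewrite !tensor_rules !mulrA ?e0q ?Ke0; lincomb F.
Qed.

Local Notation s := (sfun v w z).

Lemma sfunS a : s a.+1 = s a + w a.+1 * v a.+1 * s a.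
Proof. by rewrite /= mulrDl mul1r. Qed.

Lemma sfun_e0 a : (a <= d)%N -> e0 * s a = s a /\ s a * e0 = s a.
Proof.
elim: a => [|a IH] ha; first by rewrite /= e0z mulrDl ye0 xinve0.
have ha1 : (1 <= a.+1 <= d)%N by rewrite ha.
have [e0s se0] := IH (ltnW ha).
by rewrite sfunS mulrDr mulrDl !mulrA (e0w ha1) e0s -!mulrA se0.
Qed.

Lemma std_brw_sfun c a : (a < c <= d)%N -> std_brw c (s a).
Proof.
elim: a => [|a IH] hac; first by apply: std_brw_z; lia.
have IHa : std_brw c (s a) by apply: IH; lia.
rewrite sfunS; apply: std_brwD => //; apply: std_brwM => //.
- have lead : (a <= d)%N by lia.
  by case: (sfun_e0 lead).
- by apply: std_brw_wv; lia.
Qed.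

Lemma std_brv_sfun c a : (a < c <= d)%N -> std_brv c (s a).
Proof.
elim: a => [|a IH] hac; first by apply: std_brv_z; lia.
have IHa : std_brv c (s a) by apply: IH; lia.
rewrite sfunS; apply: std_brvD => //; apply: std_brvM => //.
- by rewrite -mulrA ve0 //; lia.
- by apply: std_brv_wv; lia.
Qed.

Lemma br_sfun_wv c a : (a < c <= d)%N ->
  br (s a) (w c * v c) = 2^-1 *: (tens (w c * v c * s a) e0 - tens (w c * v c) (s a)
                                  + tens e0 (s a * (w c * v c)) - tens (s a) (w c * v c)).
Proof. by move=> hac; apply: br_std_wv; [apply: std_brw_sfun | apply: std_brv_sfun]. Qed.

Lemma br_sfun_diag a : (a <= d)%N ->
  br (s a) (s a) = 2^-1 *: (tens e0 (s a * s a) - tens (s a * s a) e0).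
Proof.
elim: a => [|a IH] ha; first exact: br_zz.
have ha1 : (1 <= a.+1 <= d)%N by rewrite ha.
have [e0s se0] := sfun_e0 (ltnW ha).
rewrite sfunS; apply: br_diag_step => //.
- by rewrite mulrA (e0w ha1).
- by rewrite -mulrA (ve0 ha1).
- exact: IH (ltnW ha).
- exact: br_wv_wv.
- by apply: br_sfun_wv; rewrite ltnSn.
Qed.

Lemma br_sfun_lt a b : (a < b <= d)%N ->
  br (s a) (s b) = 2^-1 *: (tens e0 (s a * s b) - tens (s b * s a) e0)
    + 2^-1 *: (tens (s b) (s a) - tens (s a) (s b)).
Proof.
elim: b => [|b IH] // /andP[ltab lebd].
have hb1 : (1 <= b.+1 <= d)%N by rewrite lebd.
have [e0s _] := sfun_e0 (ltnW lebd).
have Ke0 : w b.+1 * v b.+1 * e0 = w b.+1 * v b.+1 by rewrite -mulrA (ve0 hb1).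
rewrite sfunS; apply: br_offdiag_step => //; last by apply: br_sfun_wv; rewrite ltab.
move: ltab; rewrite ltnS leq_eqVlt => /predU1P[->|ltab].
- by rewrite subrr scaler0 addr0; apply: br_sfun_diag; rewrite ltnW.
- by apply: IH; rewrite ltab ltnW.
Qed.

Lemma br_sfun_gt a b : (b < a <= d)%N ->
  br (s a) (s b) = 2^-1 *: (tens e0 (s a * s b) - tens (s b * s a) e0)
    - 2^-1 *: (tens (s b) (s a) - tens (s a) (s b)).
Proof.
move=> hba; rewrite (br_skew Hbr) br_sfun_lt // !tensor_rules.
lincomb F.
Qed.

End QuiverBracket.

Theorem mainTheorem6 (F : numClosedFieldType) (d : nat)
    (A : algType F) (T : lmodType F)
    (tens : A -> A -> T) (lact : A -> T -> T) (ract : T -> A -> T)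
    (swap : T -> T) (br : A -> A -> T)
    (e0 einf x y xinv : A) (v w : nat -> A)
    (HT : tensor_model tens lact ract swap)
    (Hbr : double_bracket lact ract swap br)
    (HA : quiver_relations d e0 einf x y xinv v w)
    (Hgen : bracket_on_generators tens br d e0 einf x y v w)
    (a b : nat) (ha : (a <= d)%N) (hb : (b <= d)%N) :
  let z := y + xinv in
  let s := sfun v w z in
  br (s a) (s b) =
    2^-1 *: (tens e0 (s a * s b) - tens (s b * s a) e0)
    + (2^-1 * osgn F a b) *: (tens (s b) (s a) - tens (s a) (s b)).
Proof.
move=> z s; rewrite {}/s {}/z.
case: (ltngtP a b) => [ltab | ltba | <-].
- by rewrite osgn_lt // mulr1 (br_sfun_lt HT Hbr HA Hgen) ?ltab.
- by rewrite osgn_gt // mulrN1 scaleNr (br_sfun_gt HT Hbr HA Hgen) ?ltba.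
- by rewrite osgn_id mulr0 scale0r addr0 (br_sfun_diag HT Hbr HA Hgen).
Qed.
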